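(* Let $\tilde L$ be a minimum-size counterexample. Let $L'\subseteq\tilde L$ be a subset which, with the order inherited from $\tilde L$, is a lattice (with least element $0_{L'}$ and greatest element $1_{L'}$), and suppose that at least one of the following holds: (i) $3<|L'|<8$; (ii) $2<|L'|<|\tilde L|-2$ and $d\le 1_{L'}$ for some dual atom $d$ of $\tilde L$. Then there exist $x\in L'\setminus\{0_{L'},1_{L'}\}$ and $y\in\tilde L\setminus L'$ such that, in $\tilde L$, $x$ upper covers $y$ or $x$ lower covers $y$.
   Context: For a poset $P$, $x$ upper covers $y$ (and $y$ lower covers $x$) if $y<x$ with nothing strictly between. Join-irreducible: upper covers exactly one element. A dual atom of a finite lattice is an element lower covered by... i.e. an element that the greatest element upper covers. For $x\in P$, ${\uparrow}x=\{y: x\le y\}$. A counterexample is a finite lattice $L$ with $|L|>1$ in which every join-irreducible $j$ satisfies $|{\uparrow}j|>|L|/2$; a minimum-size counterexample is a counterexample $\tilde L$ such that no counterexample has fewer elements. *)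

From mathcomp Require Import all_boot all_order.
Set Implicit Arguments. Unset Strict Implicit. Unset Printing Implicit Defensive.
Import Order.Theory.
Local Open Scope order_scope.

Definition ucovers {d} {T : finPOrderType d} (x y : T) : bool :=
  (y < x) && [forall z : T, ~~ ((y < z) && (z < x))].

Definition join_irr {d} {T : finPOrderType d} (j : T) : bool :=
  #|[set y : T | ucovers j y]| == 1%N.

Definition upset {d} {T : finPOrderType d} (x : T) : {set T} := [set y : T | x <= y].

Definition dual_atom {d} {T : finTBLatticeType d} (x : T) : bool := ucovers \top x.

Definition counterexample {d} (L : finTBLatticeType d) : Prop :=
  (1 < #|L|)%N /\ forall j : L, join_irr j -> (#|L| < 2 * #|upset j|)%N.

Definition min_counterexample {d} (L : finTBLatticeType d) : Prop :=
  counterexample L /\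
  forall (d' : Order.disp_t) (M : finTBLatticeType d'),
    counterexample M -> (#|L| <= #|M|)%N.

Definition induced_lattice {d} {T : finPOrderType d} (S : {set T}) : Prop :=
  forall a b : T, a \in S -> b \in S ->
    (exists2 j, j \in S & forall z, z \in S -> ((a <= z) && (b <= z)) = (j <= z)) /\
    (exists2 m, m \in S & forall z, z \in S -> ((z <= a) && (z <= b)) = (z <= m)).

(* Call a subset [B] with least element [b0] and greatest element [b1] isolated
   when no element strictly between [b0] and [b1] is in a covering relation with an
   element outside [B]; it suffices to show that [S] is not isolated.

   Removing the interior of an isolated block [B] leaves a sublattice [K] of [L]: a
   join (meet) of elements outside the interior lands below [b0] (above [b1]).  A
   join-irreducible of [K] is [b1], lies below [b0] (and then its up-set in [K]
   strictly contains that of [b1]), or is join-irreducible in [L] with the same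
   up-set.  As [K] is smaller than the minimum counterexample [L], this forces
   [|B| + 2 |up b1| <= |L| + 2].  An interior element of [B] has the same lower
   covers in [B] as in [L] and [|up j| = |up_B j| + |up b1| - 1], so every interior
   join-irreducible of [B] has more than [|B|/2] elements above it in [B].

   The lattice [S] is smaller than [L], hence not a counterexample: some [j] that is
   join-irreducible in [S] has a small up-set in [S].  Then [j] is neither [bot]
   nor interior, so [j = top], which has a unique lower cover [c] in [S].  Either
   [c] is join-irreducible in [S], which needs [|S| = 3] and then contradicts
   [|L| >= 8] via the dual atom below [top], or the same argument applies to the
   isolated block [S] minus [top]. *)

From HB Require Import structures.
From mathcomp Require Import all_boot all_order zify.
Set Implicit Arguments. Unset Strict Implicit. Unset Printing Implicit Defensive.
Import Order.Theory.
Local Open Scope order_scope.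

Lemma ex_minimal d (T : finPOrderType d) (P : pred T) x :
  P x -> exists2 m, P m & forall y, P y -> ~~ (y < m).
Proof.
move=> Px; have [m Pm minm] := arg_minnP (fun w => #|[set t | t < w]|) Px.
exists m => // y Py; apply/negP => ym; have := minm y Py.
rewrite leqNgt => /negP; apply; apply: proper_card; apply/properP; split.
  by apply/subsetP => t; rewrite !inE => /lt_trans; apply.
by exists y; rewrite !inE ?ltxx.
Qed.

Lemma ex_maximal d (T : finPOrderType d) (P : pred T) x :
  P x -> exists2 m, P m & forall y, P y -> ~~ (m < y).
Proof. by move=> Px; have [m Pm maxm] := @ex_minimal _ T^d P x Px; exists m. Qed.

Section Covers.
Variables (d : Order.disp_t) (T : finPOrderType d).
Implicit Types (A : {set T}) (x y z w : T).

Definition ucov_in A x y := (y < x) && [forall z in A, ~~ ((y < z) && (z < x))].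
Definition jirr_in A x := #|[set y in A | ucov_in A x y]| == 1%N.
Definition up_in A x := [set y in A | x <= y].

Lemma ucovers_lt x y : ucovers x y -> y < x.
Proof. by case/andP. Qed.

Lemma ucovers_between x y z : ucovers x y -> y < z -> z < x -> False.
Proof. by case/andP => _ /forallP /(_ z) /negP H yz zx; apply: H; rewrite yz zx. Qed.

Lemma ucov_inT x y : ucov_in [set: T] x y = ucovers x y.
Proof. by congr (_ && _); apply: eq_forallb => z; rewrite in_setT. Qed.

Lemma ucovers_in A x y : ucovers x y -> ucov_in A x y.
Proof.
case/andP => yx /forallP yx_cov; rewrite /ucov_in yx.
by apply/forall_inP => z _; apply: yx_cov.
Qed.

Lemma ex_lower_cover_in A x y : y \in A -> y < x ->
  exists2 w, w \in A & ucov_in A x w && (y <= w).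
Proof.
move=> yA yx; pose P w := [&& w \in A, y <= w & w < x].
have Py : P y by rewrite /P yA lexx yx.
have [w /and3P [wA yw wx] maxw] := ex_maximal Py.
exists w; rewrite // /ucov_in wx yw andbT /=; apply/forall_inP => z zA.
apply/negP => /andP [wz zx].
have Pz : P z by rewrite /P zA zx (le_trans yw (ltW wz)).
by rewrite (negbTE (maxw z Pz)) in wz.
Qed.

Lemma ex_lower_cover x y : y < x -> exists2 w, ucovers x w & y <= w.
Proof.
move=> yx; have [w _ /andP [xw yw]] := ex_lower_cover_in (in_setT y) yx.
by exists w; rewrite -?ucov_inT.
Qed.

Lemma ex_upper_cover x y : x < y -> exists2 w, ucovers w x & w <= y.
Proof.
move=> xy; pose P w := (x < w) && (w <= y).
have Py : P y by rewrite /P xy lexx.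
have [w /andP [xw wy] minw] := ex_minimal Py.
exists w => //; rewrite /ucovers xw; apply/forallP => z; apply/negP => /andP [xz zw].
have Pz : P z by rewrite /P xz (le_trans (ltW zw) wy).
by rewrite (negbTE (minw z Pz)) in zw.
Qed.

Lemma ucovers_restrict A x : (forall w, ucovers x w -> w \in A) ->
  forall y, ucovers x y = (y \in A) && ucov_in A x y.
Proof.
move=> covA y; apply/idP/andP => [xy | [yA /andP [yx noA]]].
  by split; [apply: covA | apply: ucovers_in].
have [w xw yw] := ex_lower_cover yx.
case: (eqVneq y w) => [-> // | ne_yw].
have := forall_inP noA w (covA w xw).
by rewrite lt_neqAle ne_yw yw (ucovers_lt xw).
Qed.

Lemma join_irr_restrict A x : (forall w, ucovers x w -> w \in A) ->
  join_irr x = jirr_in A x.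
Proof.
move=> covA; rewrite /join_irr /jirr_in; congr (_ == _); apply: eq_card => y.
by rewrite !inE (ucovers_restrict covA).
Qed.

Lemma jirr_in_min A b : (forall z, z \in A -> b <= z) -> ~~ jirr_in A b.
Proof.
move=> minb; apply/negP => /cards1P [c Hc].
have : c \in [set y in A | ucov_in A b y] by rewrite Hc set11.
by rewrite inE => /andP [/minb bc /andP [cb _]]; rewrite (le_gtF bc) in cb.
Qed.

End Covers.

Section InducedLattice.
Variables (d : Order.disp_t) (T : finPOrderType d) (S : {set T}) (bot top : T).
Hypotheses (latS : induced_lattice S) (botS : bot \in S) (topS : top \in S)
  (bot_le : forall z, z \in S -> bot <= z) (le_top : forall z, z \in S -> z <= top).

Record induced := Induced { ival : T; ivalP : ival \in S }.
HB.instance Definition _ := [isSub for ival].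
HB.instance Definition _ := [Finite of induced by <:].
HB.instance Definition _ := [SubChoice_isSubPOrder of induced by <: with d].

Definition ijoin (x y : induced) : induced :=
  odflt x [pick j | [forall z, ((x <= z) && (y <= z)) == (j <= z)]].
Definition imeet (x y : induced) : induced :=
  odflt x [pick m | [forall z, ((z <= x) && (z <= y)) == (z <= m)]].

Lemma ijoin_le x y z : (ijoin x y <= z) = (x <= z) && (y <= z).
Proof.
rewrite /ijoin; case: pickP => [j /forallP /(_ z) /eqP -> // | nojoin].
have [[j jS joinj] _] := latS (ivalP x) (ivalP y).
case/negP: (nojoin (Induced jS)); apply/forallP => w.
by rewrite -!Order.le_val (joinj _ (ivalP w)).
Qed.

Lemma le_imeet x y z : (x <= imeet y z) = (x <= y) && (x <= z).
Proof.
rewrite /imeet; case: pickP => [m /forallP /(_ x) /eqP -> // | nomeet].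
have [_ [m mS meetm]] := latS (ivalP y) (ivalP z).
case/negP: (nomeet (Induced mS)); apply/forallP => w.
by rewrite -!Order.le_val (meetm _ (ivalP w)).
Qed.

HB.instance Definition _ := Order.POrder_MeetJoin_isLattice.Build d induced le_imeet ijoin_le.
Lemma induced_le0x (x : induced) : Induced botS <= x.
Proof. exact: bot_le (ivalP x). Qed.

Lemma induced_lex1 (x : induced) : x <= Induced topS.
Proof. exact: le_top (ivalP x). Qed.

HB.instance Definition _ := Order.hasBottom.Build d induced induced_le0x.
HB.instance Definition _ := Order.hasTop.Build d induced induced_lex1.

Definition induced_finLattice : finTBLatticeType d := induced.

Lemma card_induced_set (P : pred T) :
  #|[set y : induced | P (ival y)]| = #|[set y in S | P y]|.
Proof.
rewrite -(card_imset _ val_inj); apply: eq_card => y.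
rewrite [in RHS]inE; apply/imsetP/andP => [[z] | [yS Py]].
  by rewrite inE => Pz ->; split; first exact: ivalP.
by exists (Induced yS); rewrite ?inE.
Qed.

Lemma card_induced : #|induced_finLattice| = #|S|.
Proof.
rewrite -cardsT (_ : setT = [set y : induced | predT (ival y)]) ?card_induced_set.
  by apply: eq_card => y; rewrite !inE andbT.
by apply/setP => y; rewrite !inE.
Qed.

Lemma counterexample_induced :
  (1 < #|S|)%N -> (forall j, j \in S -> jirr_in S j -> (#|S| < 2 * #|up_in S j|)%N) ->
  counterexample induced_finLattice.
Proof.
move=> S_gt1 upS; split=> [|j]; first by rewrite card_induced.
have -> : join_irr j = jirr_in S (ival j).
  rewrite /join_irr /jirr_in -(card_induced_set (ucov_in S (ival j))).
  congr (_ == 1%N); apply: eq_card => y.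
  rewrite !inE /ucovers /ucov_in Order.SubPreorderTheory.lt_val.
  congr (_ && _); apply/forallP/forall_inP => [noT z zS | noS z].
    by have := noT (Induced zS); rewrite -!Order.SubPreorderTheory.lt_val.
  by rewrite -!Order.SubPreorderTheory.lt_val; apply: noS (ivalP z).
have -> : #|upset j| = #|up_in S (ival j)|.
  by rewrite /up_in -card_induced_set; apply: eq_card => y; rewrite !inE -Order.le_val.
by rewrite card_induced; apply: upS (ivalP j).
Qed.

End InducedLattice.

Section SmallCounterexample.
Variables (d : Order.disp_t) (L : finTBLatticeType d).
Implicit Types (x y z c p q : L).

Lemma ucovers_le_eq x c c' : ucovers x c -> ucovers x c' -> c <= c' -> c = c'.
Proof.
move=> xc xc' cc'; case: (eqVneq c c') => // ne_cc'.
by case: (ucovers_between xc _ (ucovers_lt xc')); rewrite lt_neqAle ne_cc'.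
Qed.

Lemma join_lower_covers c p q : ucovers c p -> ucovers c q -> p != q -> p `|` q = c.
Proof.
move=> cp cq pq; have [// | ne_pq_c] := eqVneq (p `|` q) c.
have lt_pq_c : p `|` q < c.
  by rewrite lt_neqAle ne_pq_c leUx !ltW ?(ucovers_lt cp) ?(ucovers_lt cq).
move: (leUl p q); rewrite le_eqVlt => /orP [/eqP pE | p_pq]; last first.
  by case: (ucovers_between cp p_pq lt_pq_c).
have qp : q < p by rewrite lt_neqAle eq_sym pq pE leUr.
by case: (ucovers_between cq qp (ucovers_lt cp)).
Qed.

Lemma bot_lt_lower_cover c p q : ucovers c p -> ucovers c q -> p != q -> \bot < p.
Proof.
move=> cp cq pq; rewrite lt_neqAle le0x andbT; apply/eqP => pE.
have pq_lt : p < q by rewrite lt_neqAle pq -pE le0x.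
exact: ucovers_between cp pq_lt (ucovers_lt cq).
Qed.

Lemma card_upset_coatom c : ucovers \top c -> (#|upset c| <= 2)%N.
Proof.
move=> topc; apply: leq_trans (card_size [:: c; \top]); apply: subset_leq_card.
apply/subsetP => z; rewrite !inE => cz.
have [-> | ne_zt] := eqVneq z \top; first by rewrite orbT.
rewrite orbF; apply/negPn/negP => ne_zc.
case: (ucovers_between topc (z := z)).
  by rewrite lt_neqAle eq_sym ne_zc cz.
by rewrite lt_neqAle ne_zt lex1.
Qed.

Lemma atom_join_irr a : \bot < a -> (forall z, z < a -> z = \bot) -> join_irr a.
Proof.
move=> bot_a atom_a; rewrite /join_irr (_ : [set y | ucovers a y] = [set \bot]) ?cards1 //.
apply/setP => y; rewrite !inE; apply/idP/eqP => [/ucovers_lt/atom_a // | ->].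
rewrite /ucovers bot_a; apply/forallP => z; apply/negP => /andP [bot_z /atom_a zE].
by rewrite zE ltxx in bot_z.
Qed.

Lemma two_lower_covers x : ~~ join_irr x -> \bot < x ->
  exists p q, [/\ ucovers x p, ucovers x q & p != q].
Proof.
move=> njx bot_x; have [w xw _] := ex_lower_cover bot_x.
have cov_pos : (0 < #|[set y | ucovers x y]|)%N by apply/card_gt0P; exists w; rewrite inE.
have /card_gt1P [p [q [xp xq pq]]] : (1 < #|[set y | ucovers x y]|)%N.
  by move: njx cov_pos; rewrite /join_irr; case: #|_| => [|[|]].
by exists p, q; rewrite !inE in xp xq.
Qed.

Lemma lower_cover_not_le c c' : ucovers \top c -> ucovers \top c' -> c != c' ->
  ~~ join_irr c -> \bot < c ->
  exists p q, [/\ ucovers c p, ucovers c q, p != q & ~~ (q <= c')].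
Proof.
move=> topc topc' cc' njc bot_c; have [p [q [cp cq pq]]] := two_lower_covers njc bot_c.
have [qc' | nqc'] := boolP (q <= c'); last by exists p, q.
have [pc' | npc'] := boolP (p <= c'); last by exists q, p; rewrite eq_sym.
have : c <= c' by rewrite -(join_lower_covers cp cq pq) leUx pc' qc'.
by move/(ucovers_le_eq topc topc')/eqP; rewrite (negbTE cc').
Qed.

Hypothesis cexL : counterexample L.

Lemma bot_lt_top : \bot < \top :> L.
Proof.
rewrite lt_neqAle le0x andbT; apply/eqP => bot_top.
have all_bot (x : L) : x = \bot by apply/le_anti; rewrite le0x bot_top lex1.
have /card_gt1P [a [b [_ _]]] := proj1 cexL.
by rewrite (all_bot a) (all_bot b) eqxx.
Qed.

Lemma top_not_join_irr : ~~ join_irr (\top : L).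
Proof.
apply/negP => /(proj2 cexL).
rewrite (_ : upset \top = [set \top]) ?cards1; last first.
  by apply/setP => z; rewrite !inE eq_le lex1.
by have := proj1 cexL; lia.
Qed.

Lemma coatom_not_join_irr c : ucovers \top c -> (4 <= #|L|)%N -> ~~ join_irr c.
Proof.
by move=> topc L4; apply/negP => /(proj2 cexL); have := card_upset_coatom topc; lia.
Qed.

(* The two coatoms [c1], [c2] of a counterexample are not join-irreducible, so each
   has a lower cover ([q1], resp. [q2]) not below the other coatom.  With at most
   seven elements, [\bot], [\top], [c1], [c2], [q1], [q2] and the other lower cover
   [p1] of [c1] exhaust [L]; then [q1] is an atom with up-set [{q1, c1, \top}]. *)
Section Configuration.
Variables c1 c2 p1 q1 q2 : L.
Hypotheses (topc1 : ucovers \top c1) (topc2 : ucovers \top c2) (c12 : c1 != c2)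
  (c1p1 : ucovers c1 p1) (c1q1 : ucovers c1 q1) (pq1 : p1 != q1) (nq1c2 : ~~ (q1 <= c2))
  (b_q2 : \bot < q2) (q2_c2 : q2 < c2) (nq2c1 : ~~ (q2 <= c1)).

Let c1_t := ucovers_lt topc1.
Let c2_t := ucovers_lt topc2.
Let p1_c1 := ucovers_lt c1p1.
Let q1_c1 := ucovers_lt c1q1.
Let b_c1 := bot_lt_lower_cover topc1 topc2 c12.
Let b_c2 := bot_lt_lower_cover topc2 topc1 (contra_neq esym c12).
Let b_p1 := bot_lt_lower_cover c1p1 c1q1 pq1.
Let b_q1 := bot_lt_lower_cover c1q1 c1p1 (contra_neq esym pq1).
Let nc21 : ~~ (c2 <= c1).
Proof. by apply: contra_neqN (contra_neq esym c12) => /(ucovers_le_eq topc2 topc1). Qed.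

Local Notation config := [:: \bot; \top; c1; c2; p1; q1; q2].

Lemma configuration_uniq : uniq config.
Proof.
have c1q2 : c1 != q2 by apply: contraNneq nq2c1 => <-.
have c2p1 : c2 != p1 by apply: contraNneq nc21 => ->; apply: ltW.
have c2q1 : c2 != q1 by apply: contraNneq nq1c2 => <-.
have p1q2 : p1 != q2 by apply: contraNneq nq2c1 => <-; apply: ltW.
have q1q2 : q1 != q2 by apply: contraNneq nq2c1 => <-; apply: ltW.
rewrite /= !inE !negb_or (lt_eqF bot_lt_top) (lt_eqF b_c1) (lt_eqF b_c2).
rewrite (lt_eqF b_p1) (lt_eqF b_q1) (lt_eqF b_q2) (gt_eqF c1_t) (gt_eqF c2_t).
rewrite (gt_eqF (lt_trans p1_c1 c1_t)) (gt_eqF (lt_trans q1_c1 c1_t)).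
rewrite (gt_eqF (lt_trans q2_c2 c2_t)) (gt_eqF p1_c1) (gt_eqF q1_c1) (gt_eqF q2_c2).
by rewrite c12 pq1 c1q2 c2p1 c2q1 p1q2 q1q2.
Qed.

Hypothesis L_le7 : (#|L| <= 7)%N.

Lemma configuration_full z : z \in config.
Proof.
have /subset_cardP config_full : #|config| = #|L|.
  apply/eqP; rewrite eqn_leq max_card (card_uniqP configuration_uniq).
  exact: leq_trans L_le7 _.
by rewrite (config_full (subset_predT _)).
Qed.

Lemma configuration_atom z : z < q1 -> z = \bot.
Proof.
have nc2q1 : ~~ (c2 < q1) by apply: contra nc21 => /lt_trans/(_ q1_c1)/ltW.
have np1q1 : ~~ (p1 < q1) by apply/negP => /(ucovers_between c1p1); apply.
have nq2q1 : ~~ (q2 < q1) by apply: contra nq2c1 => /lt_trans/(_ q1_c1)/ltW.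
have : all [pred z | (z < q1) ==> (z == \bot)] config.
  rewrite /= eqxx (lt_gtF (lt_trans q1_c1 c1_t)) (lt_gtF q1_c1) ltxx.
  by rewrite (negbTE nc2q1) (negbTE np1q1) (negbTE nq2q1) implybT.
by move/allP/(_ z (configuration_full z))/implyP => atom /atom/eqP.
Qed.

Lemma configuration_card_upset : (#|upset q1| <= 3)%N.
Proof.
have nq1p1 : ~~ (q1 <= p1).
  by apply/negP => q1p1; apply: ucovers_between c1q1 _ p1_c1; rewrite lt_neqAle eq_sym pq1.
have nq1q2 : ~~ (q1 <= q2) by apply: contra nq1c2 => /le_lt_trans/(_ q2_c2)/ltW.
have : all [pred z | (q1 <= z) ==> (z \in [:: q1; c1; \top])] config.
  rewrite /= !inE !eqxx !orbT (lt_geF b_q1) (negbTE nq1c2) (negbTE nq1p1).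
  by rewrite (negbTE nq1q2) !implybT.
move/allP => up_q1; apply: leq_trans (card_size [:: q1; c1; \top]) => /=.
apply/subset_leq_card/subsetP => z; rewrite inE.
exact/implyP/(up_q1 z (configuration_full z)).
Qed.

Lemma configuration_false : False.
Proof.
have L_ge7 : (7 <= #|L|)%N.
  by rewrite -[7%N]/(size config) -(card_uniqP configuration_uniq) max_card.
have up_small := leq_mul (leqnn 2) configuration_card_upset.
have L_lt := proj2 cexL q1 (atom_join_irr b_q1 configuration_atom).
by have := leq_ltn_trans L_ge7 (leq_trans L_lt up_small).
Qed.

End Configuration.

Lemma card_counterexample_ge8 : (8 <= #|L|)%N.
Proof.
rewrite leqNgt; apply/negP => L_lt8.
have [c1 [c2 [topc1 topc2 c12]]] := two_lower_covers top_not_join_irr bot_lt_top.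
have c21 : c2 != c1 by rewrite eq_sym.
have L4 : (4 <= #|L|)%N.
  have uniq4 : uniq [:: \bot; \top; c1; c2].
    rewrite /= !inE !negb_or (lt_eqF bot_lt_top).
    rewrite (lt_eqF (bot_lt_lower_cover topc1 topc2 c12)).
    rewrite (lt_eqF (bot_lt_lower_cover topc2 topc1 c21)).
    by rewrite (gt_eqF (ucovers_lt topc1)) (gt_eqF (ucovers_lt topc2)) c12.
  by rewrite -[4%N]/(size [:: \bot; \top; c1; c2]) -(card_uniqP uniq4) max_card.
have njc c : ucovers \top c -> ~~ join_irr c by move/coatom_not_join_irr; apply.
have [p1 [q1 [c1p1 c1q1 pq1 nq1c2]]] :=
  lower_cover_not_le topc1 topc2 c12 (njc _ topc1) (bot_lt_lower_cover topc1 topc2 c12).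
have [p2 [q2 [c2p2 c2q2 pq2 nq2c1]]] :=
  lower_cover_not_le topc2 topc1 c21 (njc _ topc2) (bot_lt_lower_cover topc2 topc1 c21).
have b_q2 := bot_lt_lower_cover c2q2 c2p2 (contra_neq esym pq2).
have q2_c2 := ucovers_lt c2q2.
exact: configuration_false topc1 topc2 c12 c1p1 c1q1 pq1 nq1c2 b_q2 q2_c2 nq2c1 L_lt8.
Qed.
End SmallCounterexample.

Section Blocks.
Variables (d : Order.disp_t) (T : finPOrderType d).
Implicit Types (B : {set T}) (x y z : T).

Definition interior B b0 b1 x := [&& x \in B, x != b0 & x != b1].

Definition isolated B b0 b1 :=
  forall x y, interior B b0 b1 x -> y \notin B -> ~~ (ucovers x y || ucovers y x).

Lemma not_isolatedP B b0 b1 : ~ isolated B b0 b1 ->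
  exists x, [/\ x \in B, x != b0, x != b1 &
    exists y, (y \notin B) && (ucovers x y || ucovers y x)].
Proof.
move=> not_iso; case: (boolP [exists x, interior B b0 b1 x &&
    [exists y, (y \notin B) && (ucovers x y || ucovers y x)]]).
  case/existsP => x /andP [/and3P [xB xb0 xb1] /existsP [y xy]].
  by exists x; split => //; exists y.
rewrite negb_exists => /forallP no_x; case: not_iso => x y Ix yB.
apply/negP => xy; have := no_x x; rewrite Ix /=.
by apply/negP/negPn/existsP; exists y; rewrite yB.
Qed.

Lemma jirr_in_top_coatom (S : {set T}) top : top \in S -> (forall z, z \in S -> z <= top) ->
  jirr_in S top -> exists2 c, c \in S & c < top /\ forall z, z \in S -> z != top -> z <= c.
Proof.
move=> topS le_top /cards1P [c covc].
have coverP w : w \in S -> ucov_in S top w -> w = c.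
  by move=> wS topw; apply/set1P; rewrite -covc inE wS topw.
have : c \in [set y in S | ucov_in S top y] by rewrite covc set11.
rewrite inE => /andP [cS /andP [c_top _]]; exists c => //; split => // z zS z_top.
have z_lt : z < top by rewrite lt_neqAle z_top le_top.
have [w wS /andP [topw zw]] := ex_lower_cover_in zS z_lt.
by rewrite -(coverP w wS topw).
Qed.

Section RemoveTop.
Variables (S : {set T}) (top c : T).
Hypotheses (le_top : forall z, z \in S -> z <= top) (cS : c \in S) (c_top : c < top)
  (le_c : forall z, z \in S -> z != top -> z <= c).

Lemma induced_lattice_setD1_top : induced_lattice S -> induced_lattice (S :\ top).
Proof.
move=> latS a b; rewrite !inE => /andP [a_top aS] /andP [b_top bS].
have [[j jS joinj] [m mS meetm]] := latS a b aS bS.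
have le_S0 u : u \in S :\ top -> u \in S by rewrite inE => /andP [].
split.
  exists j; last by move=> z /le_S0; apply: joinj.
  have j_le_c : j <= c by rewrite -joinj // !le_c.
  by rewrite !inE jS andbT; apply: contraTneq c_top => <-; rewrite (le_gtF j_le_c).
exists m; last by move=> z /le_S0; apply: meetm.
rewrite !inE mS andbT; apply: contra_neq a_top => m_top; apply/le_anti.
rewrite le_top //= -m_top.
by have /andP [] : (m <= a) && (m <= b) by rewrite meetm.
Qed.

Lemma jirr_in_setD1_top x : x \in S -> jirr_in (S :\ top) x = jirr_in S x.
Proof.
move=> xS; have top_x := le_gtF (le_top xS).
rewrite /jirr_in; congr (_ == 1%N); apply: eq_card => y; rewrite !inE.
have -> : ucov_in (S :\ top) x y = ucov_in S x y.
  congr (_ && _); apply: eq_forallb => z; rewrite !inE.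
  by case: (eqVneq z top) => [-> | _] //=; rewrite top_x andbF implybT.
by case: (eqVneq y top) => [-> | _] //=; rewrite /ucov_in top_x andbF.
Qed.

Lemma isolated_setD1_top bot : isolated S bot top -> isolated (S :\ top) bot c.
Proof.
move=> isoS x y /and3P [+ x_bot x_c] yS0; rewrite !inE => /andP [x_top xS].
have [yS | yNS] := boolP (y \in S); last first.
  by apply: isoS yNS; rewrite /interior xS x_bot x_top.
move: yS0; rewrite !inE yS andbT negbK => /eqP ->; rewrite negb_or.
apply/andP; split; first by apply/negP => /ucovers_lt; rewrite (le_gtF (le_top xS)).
have x_lt_c : x < c by rewrite lt_neqAle x_c le_c.
by apply/negP => /ucovers_between/(_ x_lt_c c_top).
Qed.
End RemoveTop.
End Blocks.

Section MinimalCounterexample.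
Variables (d : Order.disp_t) (L : finTBLatticeType d).
Hypothesis minL : min_counterexample L.

Lemma exists_jirr_in_small_up (A : {set L}) a0 a1 :
  induced_lattice A -> a0 \in A -> a1 \in A ->
  (forall z, z \in A -> a0 <= z) -> (forall z, z \in A -> z <= a1) ->
  (1 < #|A|)%N -> (#|A| < #|L|)%N ->
  exists2 j, j \in A & jirr_in A j && (2 * #|up_in A j| <= #|A|)%N.
Proof.
move=> latA a0A a1A a0_le le_a1 A_gt1 A_lt_L.
case: (boolP [exists j in A, jirr_in A j && (2 * #|up_in A j| <= #|A|)%N]).
  by case/exists_inP => j; exists j.
rewrite negb_exists_in => /forall_inP small_up_none.
have cexA : counterexample (induced_finLattice latA a0A a1A a0_le le_a1).
  apply: counterexample_induced => // j jA jj.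
  by rewrite ltnNge; have := small_up_none j jA; rewrite jj.
by have := proj2 minL _ _ cexA; rewrite card_induced leqNgt A_lt_L.
Qed.

End MinimalCounterexample.

Section IsolatedBlock.
Variables (d : Order.disp_t) (L : finTBLatticeType d) (B : {set L}) (b0 b1 : L).
Hypotheses (b0B : b0 \in B) (b1B : b1 \in B)
  (b0_le : forall z, z \in B -> b0 <= z) (le_b1 : forall z, z \in B -> z <= b1)
  (isoB : isolated B b0 b1).
Implicit Types (x y z : L).
Local Notation inner := (interior B b0 b1).

Lemma interior_lower_cover x y : inner x -> ucovers x y -> y \in B.
Proof. by move=> Ix xy; apply: contraT => yB; case/norP: (isoB Ix yB); rewrite xy. Qed.

Lemma interior_upper_cover x y : inner x -> ucovers y x -> y \in B.
Proof. by move=> Ix yx; apply: contraT => yB; case/norP: (isoB Ix yB); rewrite yx. Qed.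

Lemma b0_lt_interior x : inner x -> b0 < x.
Proof. by case/and3P => xB x_b0 _; rewrite lt_neqAle eq_sym x_b0 b0_le. Qed.

Lemma interior_lt_b1 x : inner x -> x < b1.
Proof. by case/and3P => xB _ x_b1; rewrite lt_neqAle x_b1 le_b1. Qed.

Lemma le_interior_out x z : inner x -> z \notin B -> z <= x -> z <= b0.
Proof.
move=> Ix zB zx; pose P w := inner w && (z <= w).
have Px : P x by rewrite /P Ix zx.
have [w /andP [Iw zw] minw] := ex_minimal Px.
have z_lt_w : z < w.
  by rewrite lt_neqAle zw andbT; apply: contraNneq zB => ->; case/and3P: Iw.
have [v wv zv] := ex_lower_cover z_lt_w.
have [<- // | v_b0] := eqVneq v b0.
have v_b1 : v != b1 by rewrite lt_eqF // (lt_trans (ucovers_lt wv) (interior_lt_b1 Iw)).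
have Pv : P v by rewrite /P /interior (interior_lower_cover Iw wv) v_b0 v_b1 zv.
by have := minw v Pv; rewrite (ucovers_lt wv).
Qed.

Lemma interior_le_out x z : inner x -> z \notin B -> x <= z -> b1 <= z.
Proof.
move=> Ix zB xz; pose P w := inner w && (w <= z).
have Px : P x by rewrite /P Ix xz.
have [w /andP [Iw wz] maxw] := ex_maximal Px.
have w_lt_z : w < z.
  by rewrite lt_neqAle wz andbT; apply: contraNneq zB => <-; case/and3P: Iw.
have [v vw vz] := ex_upper_cover w_lt_z.
have [<- // | v_b1] := eqVneq v b1.
have v_b0 : v != b0 by rewrite gt_eqF // (lt_trans (b0_lt_interior Iw) (ucovers_lt vw)).
have Pv : P v by rewrite /P /interior (interior_upper_cover Iw vw) v_b0 v_b1 vz.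
by have := maxw v Pv; rewrite (ucovers_lt vw).
Qed.

Lemma join_irr_interior x : inner x -> join_irr x = jirr_in B x.
Proof. by move=> Ix; apply: join_irr_restrict => w; apply: interior_lower_cover. Qed.

(* [upset x] splits into the part inside [B] and the strict upset of [b1]. *)
Lemma card_upset_interior x : inner x ->
  (#|upset x| + 1 = #|up_in B x| + #|upset b1|)%N.
Proof.
move=> Ix; have xB : x \in B by case/and3P: Ix.
have upsetE : upset x = up_in B x :|: (upset b1 :\ b1).
  apply/setP => y; rewrite !inE; apply/idP/idP => [xy | ].
    have [_ | yNB] := boolP (y \in B); first by rewrite xy.
    by rewrite (interior_le_out Ix yNB xy) andbT /=; apply: contraNneq yNB => ->.
  by case/orP => [/andP [] // | /andP [_ /(le_trans (le_b1 xB))]].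
have disj : up_in B x :&: (upset b1 :\ b1) = set0.
  apply/setP => y; rewrite !inE; apply/negP => /andP [/andP [yB _] /andP [y_b1 b1y]].
  by move: y_b1; rewrite eq_le b1y le_b1.
have := cardsUI (up_in B x) (upset b1 :\ b1); rewrite -upsetE disj cards0 addn0 => ->.
by rewrite (cardsD1 b1 (upset b1)) inE lexx add1n addn1 addnS.
Qed.

Local Notation outer := [set x | ~~ inner x].

Lemma le_interior_outer a y : ~~ inner a -> inner y -> a <= y -> a <= b0.
Proof.
move=> Na Iy ay; have [aB | aNB] := boolP (a \in B); last exact: le_interior_out Iy aNB ay.
have [-> // | a_b0] := eqVneq a b0.
move: Na; rewrite /interior aB a_b0 negbK => /eqP a_b1.
by rewrite a_b1 (lt_geF (interior_lt_b1 Iy)) in ay.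
Qed.

Lemma interior_le_outer a y : ~~ inner a -> inner y -> y <= a -> b1 <= a.
Proof.
move=> Na Iy ya; have [aB | aNB] := boolP (a \in B); last exact: interior_le_out Iy aNB ya.
have [-> // | a_b1] := eqVneq a b1.
move: Na; rewrite /interior aB a_b1 andbT negbK => /eqP a_b0.
by rewrite a_b0 (lt_geF (b0_lt_interior Iy)) in ya.
Qed.

Lemma induced_lattice_outer : induced_lattice outer.
Proof.
move=> a b; rewrite !inE => Na Nb; split.
  exists (a `|` b); last by move=> z _; rewrite leUx.
  rewrite inE; apply/negP => Iab.
  have : a `|` b <= b0.
    by rewrite leUx (le_interior_outer Na Iab (leUl a b)) (le_interior_outer Nb Iab (leUr b a)).
  by rewrite (lt_geF (b0_lt_interior Iab)).
exists (a `&` b); last by move=> z _; rewrite lexI.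
rewrite inE; apply/negP => Iab.
have : b1 <= a `&` b.
  by rewrite lexI (interior_le_outer Na Iab (leIl a b)) (interior_le_outer Nb Iab (leIr b a)).
by rewrite (lt_geF (interior_lt_b1 Iab)).
Qed.

Lemma card_outer : b0 != b1 -> (#|outer| + #|B| = #|L| + 2)%N.
Proof.
move=> b01; have innerE : [set x | inner x] = B :\ b0 :\ b1.
  by apply/setP => x; rewrite !inE /interior; case: (x \in B); case: (x != b0); case: (x != b1).
have card_inner : (#|[set x | inner x]| + 2 = #|B|)%N.
  rewrite innerE (cardsD1 b0 B) b0B (cardsD1 b1 (B :\ b0)) !inE eq_sym b01 b1B.
  by rewrite addn2 add1n.
rewrite -card_inner -(cardsC [set x | inner x]) (_ : outer = ~: [set x | inner x]).
  by rewrite addnCA addnA.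
by apply/setP => x; rewrite !inE.
Qed.

Hypothesis minL : min_counterexample L.

Lemma card_outer_lt_up_in j : b0 < b1 ->
  (#|L| + 2 < #|B| + 2 * #|upset b1|)%N -> j \in outer -> jirr_in outer j ->
  (#|outer| < 2 * #|up_in outer j|)%N.
Proof.
move=> b01 big; rewrite inE => Nj jj.
have outer_lt : (#|outer| < 2 * #|upset b1|)%N.
  by have := card_outer (negbT (lt_eqF b01)); lia.
have outer_b1 y : b1 <= y -> ~~ inner y.
  by move=> b1y; apply/negP => /interior_lt_b1/lt_geF; rewrite b1y.
have [-> | j_b1] := eqVneq j b1.
  have -> : up_in outer b1 = upset b1.
    by apply/setP => y; rewrite !inE; case b1y: (b1 <= y); rewrite ?andbF ?andbT ?outer_b1.
  exact: outer_lt.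
have [jb0 | jNb0] := boolP (j <= b0).
  have : (#|upset b1| < #|up_in outer j|)%N.
    apply: proper_card; apply/properP; split.
      apply/subsetP => y; rewrite !inE => b1y.
      by rewrite outer_b1 //= (le_trans jb0 (le_trans (ltW b01) b1y)).
    by exists b0; rewrite !inE ?(lt_geF b01) // /interior eqxx andbF.
  by move=> up_lt; apply: (ltn_trans outer_lt); rewrite ltn_pmul2l.
have jNB : j \notin B.
  apply/negP => jB; move: Nj; rewrite /interior jB j_b1 andbT negbK => /eqP j_b0.
  by rewrite j_b0 lexx in jNb0.
have up_j : up_in outer j = upset j.
  apply/setP => y; rewrite !inE; case jy: (j <= y); rewrite ?andbF ?andbT //.
  by apply/negP => Iy; rewrite (le_interior_outer Nj Iy jy) in jNb0.
have jirr_j : join_irr j.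
  rewrite (join_irr_restrict (A := outer)) // => w jw; rewrite inE.
  by apply/negP => Iw; rewrite (interior_upper_cover Iw jw) in jNB.
rewrite up_j; apply: leq_ltn_trans (proj2 (proj1 minL) j jirr_j).
by rewrite -cardsT subset_leq_card ?subsetT.
Qed.

Lemma isolated_block_card_bound x0 : inner x0 ->
  (#|B| + 2 * #|upset b1| <= #|L| + 2)%N.
Proof.
move=> Ix0; rewrite leqNgt; apply/negP => big.
have b01 := lt_trans (b0_lt_interior Ix0) (interior_lt_b1 Ix0).
have botK : \bot \in outer by rewrite inE; apply/negP => /b0_lt_interior; rewrite ltx0.
have topK : \top \in outer by rewrite inE; apply/negP => /interior_lt_b1; rewrite lt1x.
have K_gt1 : (1 < #|outer|)%N.
  by apply/card_gt1P; exists b0, b1; rewrite !inE /interior !eqxx !andbF (lt_eqF b01).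
have K_lt : (#|outer| < #|L|)%N.
  by rewrite -cardsT; apply: proper_card; apply/properP; split => //; exists x0; rewrite !inE ?Ix0.
have [j jK /andP [jj]] := exists_jirr_in_small_up minL induced_lattice_outer botK topK
  (fun z _ => le0x z) (fun z _ => lex1 z) K_gt1 K_lt.
by rewrite leqNgt (card_outer_lt_up_in b01 big jK jj).
Qed.

Lemma isolated_block_jirr_up j : inner j -> jirr_in B j -> (#|B| < 2 * #|up_in B j|)%N.
Proof.
move=> Ij jj; rewrite -(join_irr_interior Ij) in jj.
have := proj2 (proj1 minL) j jj; have := card_upset_interior Ij.
have := isolated_block_card_bound Ij; lia.
Qed.
End IsolatedBlock.

Section IsolatedSublattice.
Variables (d : Order.disp_t) (L : finTBLatticeType d) (S : {set L}) (bot top : L).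
Hypotheses (minL : min_counterexample L) (latS : induced_lattice S)
  (botS : bot \in S) (topS : top \in S)
  (bot_le : forall z, z \in S -> bot <= z) (le_top : forall z, z \in S -> z <= top)
  (isoS : isolated S bot top).

Section TopCover.
Variable c : L.
Hypotheses (cS : c \in S) (c_top : c < top) (le_c : forall z, z \in S -> z != top -> z <= c)
  (c_bot : c != bot).

Let Ic : interior S bot top c.
Proof. by rewrite /interior cS c_bot lt_eqF. Qed.

Lemma card_up_in_top_cover : (#|up_in S c| <= 2)%N.
Proof.
apply: leq_trans (card_size [:: c; top]); apply/subset_leq_card/subsetP => y.
rewrite !inE => /andP [yS cy]; have [-> | y_top] := eqVneq y top; first by rewrite orbT.
by rewrite orbF eq_le cy le_c.
Qed.

Lemma top_cover_jirr_in_small : jirr_in S c -> (#|S| <= 3)%N.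
Proof.
move=> jc; have := isolated_block_jirr_up botS topS bot_le le_top isoS minL Ic jc.
by have := card_up_in_top_cover; lia.
Qed.

Lemma top_cover_jirr_in_false (da : L) : dual_atom da -> da <= top -> jirr_in S c -> False.
Proof.
move=> atom_da da_top jc; rewrite -(join_irr_interior isoS Ic) in jc.
have up_top : (#|upset top| <= 2)%N.
  apply: leq_trans (card_upset_coatom atom_da); apply/subset_leq_card/subsetP => y.
  by rewrite !inE; apply: le_trans.
have := proj2 (proj1 minL) c jc; have := card_upset_interior topS bot_le le_top isoS Ic.
have := card_up_in_top_cover; have := card_counterexample_ge8 (proj1 minL); lia.
Qed.

Lemma top_cover_not_jirr_in_false : (#|S| < #|L|)%N -> ~~ jirr_in S c -> False.
Proof.
move=> S_lt njc; pose S0 := S :\ top.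
have in_S0 z : z \in S -> z != top -> z \in S0 by move=> zS z_top; rewrite !inE z_top.
have S0_sub z : z \in S0 -> z \in S by rewrite !inE => /andP [].
have bot_top : bot != top by rewrite lt_eqF // (le_lt_trans (bot_le cS) c_top).
have botS0 := in_S0 bot botS bot_top.
have cS0 := in_S0 c cS (negbT (lt_eqF c_top)).
have bot_le0 z : z \in S0 -> bot <= z by move/S0_sub; apply: bot_le.
have le_c0 z : z \in S0 -> z <= c by rewrite !inE => /andP [z_top zS]; apply: le_c.
have isoS0 := isolated_setD1_top le_top c_top le_c isoS.
have latS0 := induced_lattice_setD1_top le_top cS c_top le_c latS.
have S0_gt1 : (1 < #|S0|)%N by apply/card_gt1P; exists bot, c; rewrite botS0 cS0 eq_sym.
have S0_lt : (#|S0| < #|L|)%N by apply: leq_ltn_trans S_lt; apply/subset_leq_card/subsetP.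
have [j jS0 /andP [jj small_up]] :=
  exists_jirr_in_small_up minL latS0 botS0 cS0 bot_le0 le_c0 S0_gt1 S0_lt.
have j_bot : j != bot by apply: contraTneq jj => ->; apply: jirr_in_min.
have j_c : j != c by apply: contraNneq njc => <-; rewrite -(jirr_in_setD1_top le_top) ?S0_sub.
have Ij : interior S0 bot c j by rewrite /interior jS0 j_bot j_c.
have := isolated_block_jirr_up botS0 cS0 bot_le0 le_c0 isoS0 minL Ij jj.
by rewrite ltnNge small_up.
Qed.
End TopCover.

Lemma isolated_sublattice_false :
  (3 < #|S| < 8)%N \/
  ((2 < #|S|)%N /\ (#|S| < #|L| - 2)%N /\ exists2 x : L, dual_atom x & x <= top) ->
  False.
Proof.
move=> hsize; have L8 := card_counterexample_ge8 (proj1 minL).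
have S_gt2 : (2 < #|S|)%N by case: hsize => [/andP [/ltnW] | []].
have S_lt : (#|S| < #|L|)%N by case: hsize; lia.
have [j jS /andP [jj small_up]] :=
  exists_jirr_in_small_up minL latS botS topS bot_le le_top (ltnW S_gt2) S_lt.
have j_bot : j != bot by apply: contraTneq jj => ->; apply: jirr_in_min.
have [j_top | j_top] := eqVneq j top; last first.
  have Ij : interior S bot top j by rewrite /interior jS j_bot j_top.
  have := isolated_block_jirr_up botS topS bot_le le_top isoS minL Ij jj.
  by rewrite ltnNge small_up.
rewrite j_top in jj; have [c cS [c_top le_c]] := jirr_in_top_coatom topS le_top jj.
have c_bot : c != bot.
  apply: contraTneq S_gt2 => c_bot; rewrite -leqNgt.
  apply: leq_trans (card_size [:: bot; top]); apply/subset_leq_card/subsetP => z zS.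
  rewrite !inE; have [-> | z_top] := eqVneq z top; first by rewrite orbT.
  by rewrite orbF eq_le bot_le // andbT -c_bot le_c.
have [jc | njc] := boolP (jirr_in S c); last first.
  exact: top_cover_not_jirr_in_false cS c_top le_c c_bot S_lt njc.
case: hsize => [/andP [S4 _] | [_ [_ [da atom_da da_top]]]].
  by have := top_cover_jirr_in_small cS c_top le_c c_bot jc; rewrite leqNgt S4.
exact: (top_cover_jirr_in_false cS c_top le_c c_bot atom_da da_top jc).
Qed.
End IsolatedSublattice.

Theorem theorem2p15 (d : Order.disp_t) (L : finTBLatticeType d)
  (S : {set L}) (bot top : L) :
  min_counterexample L ->
  induced_lattice S ->
  bot \in S -> top \in S ->
  (forall z, z \in S -> bot <= z) ->
  (forall z, z \in S -> z <= top) ->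
  ((3 < #|S| < 8)%N \/
   ((2 < #|S|)%N /\ (#|S| < #|L| - 2)%N /\ exists2 x : L, dual_atom x & x <= top)) ->
  exists x : L, [/\ x \in S, x != bot, x != top &
    exists y : L, (y \notin S) && (ucovers x y || ucovers y x)].
Proof.
move=> minL latS botS topS bot_le le_top hsize; apply: not_isolatedP => isoS.
exact: isolated_sublattice_false minL latS botS topS bot_le le_top isoS hsize.
Qed.
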